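(* Let $A$ be a domain, let $F$ be a strong filtration on $A$ by $(\mathbb{Z}^M,<_1)$, and let $G$ be a strong filtration on $\mathrm{gr}_F(A)$ by $(\mathbb{Z}^L,<_2)$ which is compatible with the grading induced by $F$. Then there is a strong filtration $F\circ G$ on $A$ by $(\mathbb{Z}^{M+L},<_1\circ<_2)$, where $<_1\circ<_2$ is the lexicographic order that first compares by $<_1$ and breaks ties with $<_2$, and its associated graded algebra is $\mathrm{gr}_{F\circ G}(A)=\mathrm{gr}_G(\mathrm{gr}_F(A))$.
   Context: A filtration by a totally ordered group $(\mathbb{Z}^k,<)$ is an increasing family of subspaces $F_{\le w}$ with $F_{\le w}F_{\le u}\subset F_{\le w+u}$ and union the whole algebra; it is strong if its associated graded algebra $\bigoplus_w F_{\le w}/F_{<w}$ is a domain. Compatibility of $G$ with the grading means each graded piece $F_{\le w}/F_{<w}$ of $\mathrm{gr}_F(A)$ is itself filtered by the spaces of $G$. *)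

From HB Require Import structures.
From mathcomp Require Import all_boot all_order all_algebra.
Set Implicit Arguments. Unset Strict Implicit. Unset Printing Implicit Defensive.
Import Order.TTheory GRing.Theory Num.Theory.
Local Open Scope ring_scope.

Notation Zn n := 'rV[int]_n.

Definition ordered_group (n : nat) (lt : rel (Zn n)) : Prop :=
  [/\ forall w, ~~ lt w w,
      forall w u z, lt w u -> lt u z -> lt w z,
      forall w u, w != u -> lt w u || lt u w
    & forall w u z, lt w u -> lt (w + z) (u + z)].

Definition le_of (n : nat) (lt : rel (Zn n)) : rel (Zn n) :=
  fun w u => (w == u) || lt w u.

Definition lexlt (M L : nat) (lt1 : rel (Zn M)) (lt2 : rel (Zn L)) : rel (Zn (M + L)) :=
  fun x y => lt1 (lsubmx x) (lsubmx y)
             || ((lsubmx x == lsubmx y) && lt2 (rsubmx x) (rsubmx y)).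

Definition subspace (k : fieldType) (V : lmodType k) (S : V -> Prop) : Prop :=
  S 0 /\ forall (c : k) x y, S x -> S y -> S (c *: x + y).

Definition domain (R : nzRingType) : Prop :=
  forall a b : R, a * b = 0 -> a = 0 \/ b = 0.

Section Filt.
Variables (k : fieldType) (A : algType k) (n : nat) (lt : rel (Zn n)).

(* F w is the subspace F_{<= w}. *)
Definition filtration (F : Zn n -> A -> Prop) : Prop :=
  [/\ forall w, subspace (F w),
      forall w u, le_of lt w u -> forall a, F w a -> F u a,
      forall w u a b, F w a -> F u b -> F (w + u) (a * b)
    & forall a, exists w, F w a].

Definition Flt (F : Zn n -> A -> Prop) (w : Zn n) (a : A) : Prop :=
  exists u, lt u w /\ F u a.

(* [is_gr F B sym]: the k-algebra B, together with the symbol maps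
   sym w : F_{<=w} -> B (with kernel F_{<w}), is the associated graded algebra
   gr_F(A) = (+)_w F_{<=w}/F_{<w}; the image of sym w is the degree-w piece. *)
Definition is_gr (F : Zn n -> A -> Prop) (B : algType k) (sym : Zn n -> A -> B) : Prop :=
  [/\ forall w (c : k) a b, F w a -> F w b -> sym w (c *: a + b) = c *: sym w a + sym w b,
      forall w a, F w a -> (sym w a = 0 <-> Flt F w a),
      forall w u a b, F w a -> F u b -> sym w a * sym u b = sym (w + u) (a * b),
      forall x : B, exists s : seq (Zn n * A),
          [/\ uniq (map fst s), (forall p, p \in s -> F p.1 p.2)
            & x = \sum_(p <- s) sym p.1 p.2]
    & forall s : seq (Zn n * A), uniq (map fst s) -> (forall p, p \in s -> F p.1 p.2) ->
          \sum_(p <- s) sym p.1 p.2 = 0 -> forall p, p \in s -> sym p.1 p.2 = 0].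

End Filt.

(* A filtration G on gr_F(A) = B is compatible with the grading induced by F:
   every homogeneous component of an element of G_{<=v} lies in G_{<=v}. *)
Definition compatible (k : fieldType) (A : algType k) (M L : nat)
  (F : Zn M -> A -> Prop) (B : algType k) (sym : Zn M -> A -> B)
  (G : Zn L -> B -> Prop) : Prop :=
  forall v (s : seq (Zn M * A)), uniq (map fst s) -> (forall p, p \in s -> F p.1 p.2) ->
    G v (\sum_(p <- s) sym p.1 p.2) -> forall p, p \in s -> G v (sym p.1 p.2).

From HB Require Import structures.
From mathcomp Require Import all_boot all_order all_algebra.
Import GRing.Theory.
Local Open Scope ring_scope.
Set Implicit Arguments. Unset Strict Implicit.

(* Put (F o G)_{<= (w, v)} = { a in F_{<= w} | sym_F w a in G_{<= v} }.  Its
   symbol at (w, v) is sym_G v (sym_F w a), and this vanishes exactly when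
   a lies in F_{< w} (then sym_F w a = 0) or sym_F w a lies in G_{< v}, i.e.
   exactly when a lies in (F o G)_{< (w, v)} for the lexicographic order.
   Spanning: an element of gr_G(gr_F A) is a sum of symbols of elements b_v of
   G_{<= v}, and by compatibility each F-homogeneous component of b_v stays in
   G_{<= v}.  Independence: regroup a vanishing sum of (F o G)-symbols by its
   G-degrees v; independence for G kills each group b_v, and compatibility
   pushes every F-homogeneous component of b_v into G_{< v}.  Strongness needs
   no work: the associated graded algebra is gr_G(gr_F A) itself. *)

Lemma big_seq_fibers (R : nmodType) (I J : eqType) (s : seq I) (V : seq J)
    (g : I -> J) (f : I -> R) :
  uniq V -> (forall q, q \in s -> g q \in V) ->
  \sum_(q <- s) f q = \sum_(v <- V) \sum_(q <- s | g q == v) f q.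
Proof.
move=> uV sV; rewrite (exchange_big_dep predT) //=.
apply: eq_big_seq => q sq; rewrite -big_filter.
suff -> : [seq v <- V | g q == v] = [:: g q] by rewrite big_seq1.
rewrite -(filter_pred1_uniq uV (sV q sq)); apply: eq_filter => v /=.
by rewrite eq_sym.
Qed.

Lemma lexlt_ordered_group (M L : nat) (lt1 : rel 'rV[int]_M) (lt2 : rel 'rV[int]_L) :
  ordered_group lt1 -> ordered_group lt2 -> ordered_group (lexlt lt1 lt2).
Proof.
case=> irr1 tr1 tot1 add1 [irr2 tr2 tot2 add2]; rewrite /lexlt; split.
- by move=> w; rewrite (negbTE (irr1 _)) (negbTE (irr2 _)) eqxx.
- move=> w u z /orP[h1|/andP[/eqP e1 h1]] /orP[h2|/andP[/eqP e2 h2]].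
  + by rewrite (tr1 _ _ _ h1 h2).
  + by rewrite -e2 h1.
  + by rewrite e1 h2.
  + by rewrite e1 e2 eqxx (tr2 _ _ _ h1 h2) orbT.
- move=> w u neq_wu; case: (eqVneq (lsubmx w) (lsubmx u)) => [el|nel].
  + have : rsubmx w != rsubmx u.
      by apply: contra neq_wu => /eqP er; rewrite -(hsubmxK w) -(hsubmxK u) el er.
    move/tot2; rewrite el (negbTE (irr1 _)) /=.
    by case/orP=> ->; rewrite ?orbT.
  + by case/orP: (tot1 _ _ nel) => ->; rewrite ?orbT.
- move=> w u z; rewrite !raddfD /= => /orP[h|/andP[/eqP e h]].
    by rewrite add1.
  by rewrite e eqxx add2 // orbT.
Qed.

Section FiltrationFacts.
Variables (k : fieldType) (A : algType k) (n : nat) (lt : rel 'rV[int]_n).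
Variable F : 'rV[int]_n -> A -> Prop.
Hypothesis filtF : filtration lt F.

Lemma filt0 w : F w 0.
Proof. by case: filtF => subF _ _ _; case: (subF w). Qed.

Lemma filtD w a b : F w a -> F w b -> F w (a + b).
Proof.
case: filtF => subF _ _ _; case: (subF w) => _ lin Fa Fb.
by have := lin 1 a b Fa Fb; rewrite scale1r.
Qed.

Lemma filt_sum w (I : eqType) (t : seq I) (f : I -> A) :
  (forall i, i \in t -> F w (f i)) -> F w (\sum_(i <- t) f i).
Proof.
elim: t => [|x t IHt] Ft; first by rewrite big_nil; apply: filt0.
rewrite big_cons; apply: filtD; first by apply: Ft; rewrite mem_head.
by apply: IHt => i ti; apply: Ft; rewrite inE ti orbT.
Qed.

Variables (B : algType k) (sym : 'rV[int]_n -> A -> B).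
Hypothesis grB : is_gr lt F sym.

Lemma symD w a b : F w a -> F w b -> sym w (a + b) = sym w a + sym w b.
Proof.
case: grB => lin _ _ _ _ Fa Fb.
by have := lin w 1 a b Fa Fb; rewrite !scale1r.
Qed.

Lemma sym0 w : sym w 0 = 0.
Proof.
apply: (addrI (sym w 0)).
by rewrite addr0 -symD ?addr0 //; apply: filt0.
Qed.

Lemma sym_sum w (I : eqType) (t : seq I) (f : I -> A) :
  (forall i, i \in t -> F w (f i)) ->
  sym w (\sum_(i <- t) f i) = \sum_(i <- t) sym w (f i).
Proof.
elim: t => [|x t IHt] Ft; first by rewrite !big_nil sym0.
have Ft' i : i \in t -> F w (f i) by move=> ti; apply: Ft; rewrite inE ti orbT.
have Fx : F w (f x) by apply: Ft; rewrite mem_head.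
by rewrite !big_cons symD ?IHt //; apply: filt_sum.
Qed.

Lemma sym_eq0P w a : F w a -> sym w a = 0 <-> Flt lt F w a.
Proof. by case: grB => _ ker _ _ _; apply: ker. Qed.

End FiltrationFacts.

Section CompositeFiltration.
Variables (k : fieldType) (A : algType k) (M L : nat).
Variables (lt1 : rel 'rV[int]_M) (lt2 : rel 'rV[int]_L).
Variables (F : 'rV[int]_M -> A -> Prop) (B : algType k) (symF : 'rV[int]_M -> A -> B).
Variables (G : 'rV[int]_L -> B -> Prop) (C : algType k) (symG : 'rV[int]_L -> B -> C).
Hypotheses (filtF : filtration lt1 F) (grF : is_gr lt1 F symF).
Hypotheses (filtG : filtration lt2 G) (grG : is_gr lt2 G symG).
Hypothesis compFG : compatible F symF G.

Definition comp_filt (x : 'rV[int]_(M + L)) (a : A) : Prop :=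
  F (lsubmx x) a /\ G (rsubmx x) (symF (lsubmx x) a).

Definition comp_sym (x : 'rV[int]_(M + L)) (a : A) : C :=
  symG (rsubmx x) (symF (lsubmx x) a).

Lemma comp_filtE w v a :
  comp_filt (row_mx w v) a <-> F w a /\ G v (symF w a).
Proof. by rewrite /comp_filt row_mxKl row_mxKr. Qed.

Lemma comp_filt_filtration : filtration (lexlt lt1 lt2) comp_filt.
Proof.
have [subF monoF mulF exF] := filtF; have [subG monoG mulG exG] := filtG.
have [linF _ symFM _ _] := grF.
split.
- move=> x; split.
    rewrite /comp_filt (sym0 filtF grF).
    by split; [exact: (filt0 filtF _) | exact: (filt0 filtG _)].
  move=> c a b [Fa Ga] [Fb Gb]; split; first by case: (subF (lsubmx x)) => _; apply.
  by rewrite linF //; case: (subG (rsubmx x)) => _; apply.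
- move=> x y /orP[/eqP <- //|/orP[ltl|/andP[/eqP el ltr]]] a [Fa Ga].
  + have Fya : F (lsubmx y) a by apply: monoF Fa; rewrite /le_of ltl orbT.
    split=> //; rewrite (proj2 (sym_eq0P grF Fya)); first exact: (filt0 filtG).
    by exists (lsubmx x).
  + by rewrite /comp_filt -el; split=> //; apply: monoG Ga; rewrite /le_of ltr orbT.
- move=> x y a b [Fa Ga] [Fb Gb]; rewrite /comp_filt !raddfD /=.
  by split; [exact: mulF | rewrite -symFM //; exact: mulG].
- move=> a; have [w Fwa] := exF a; have [v Gv] := exG (symF w a).
  by exists (row_mx w v); apply/comp_filtE.
Qed.

Lemma comp_sym_eq0P x a :
  comp_filt x a -> comp_sym x a = 0 <-> Flt (lexlt lt1 lt2) comp_filt x a.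
Proof.
move=> [Fa Ga]; rewrite /comp_sym; split.
- move=> /(sym_eq0P grG Ga) [v [ltv Gv]].
  exists (row_mx (lsubmx x) v); rewrite /lexlt row_mxKl row_mxKr eqxx ltv orbT.
  by split=> //; apply/comp_filtE.
- move=> [y [/orP[ltl|/andP[/eqP el ltr]] [Fy Gy]]].
    by rewrite (proj2 (sym_eq0P grF Fa)) ?(sym0 filtG grG) //; exists (lsubmx y).
  by apply/(sym_eq0P grG Ga); exists (rsubmx y); rewrite -el.
Qed.

Lemma comp_sym_span (t : seq ('rV[int]_L * B)) :
  uniq (map fst t) -> (forall p, p \in t -> G p.1 p.2) ->
  exists s : seq ('rV[int]_(M + L) * A),
    [/\ uniq (map fst s), (forall q, q \in s -> comp_filt q.1 q.2),
        (forall q, q \in s -> rsubmx q.1 \in map fst t)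
      & \sum_(p <- t) symG p.1 p.2 = \sum_(q <- s) comp_sym q.1 q.2].
Proof.
elim: t => [|[v b] t IHt] /=; first by exists [::]; rewrite !big_nil.
case/andP=> vt ut Gt.
have Gvb : G v b by apply: (Gt (v, b)); rewrite mem_head.
have [s [us Hs rs es]] := IHt ut (fun p tp => Gt p (mem_behead (s := (v, b) :: t) tp)).
have [_ _ _ spanF _] := grF; have [sb [usb Fsb eb]] := spanF b.
have Gsb p : p \in sb -> G v (symF p.1 p.2) by apply: compFG; rewrite -?eb.
pose lift (p : 'rV[int]_M * A) := (row_mx p.1 v, p.2).
exists (map lift sb ++ s); split.
- rewrite map_cat cat_uniq us andbT.
  have -> : map fst (map lift sb) = map (row_mx^~ v) (map fst sb) by rewrite -!map_comp.
  rewrite map_inj_uniq ?usb /=; last by move=> w1 w2 /eq_row_mx [].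
  apply/hasPn => x /mapP [q sq ->]; apply/negP => /mapP [p _ ex].
  by move: (rs q sq) vt; rewrite ex row_mxKr => ->.
- move=> q; rewrite mem_cat => /orP[/mapP [p sp ->]|]; last exact: Hs.
  by apply/comp_filtE; split; [exact: Fsb | exact: Gsb].
- move=> q; rewrite mem_cat inE => /orP[/mapP [p _ ->]|sq].
    by rewrite row_mxKr eqxx.
  by rewrite rs ?orbT.
- rewrite big_cons /= big_cat big_map es {1}eb (sym_sum filtG grG) //.
  by congr (_ + _); apply: eq_bigr => p _; rewrite /comp_sym row_mxKl row_mxKr.
Qed.

Section GradedSlices.
Variable s : seq ('rV[int]_(M + L) * A).
Hypothesis comp_filt_s : forall q, q \in s -> comp_filt q.1 q.2.

Definition Gslice (v : 'rV[int]_L) : B :=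
  \sum_(q <- s | rsubmx q.1 == v) symF (lsubmx q.1) q.2.

Lemma Gslice_filt v : G v (Gslice v).
Proof.
rewrite /Gslice -big_filter; apply: (filt_sum filtG) => q.
by rewrite mem_filter => /andP[/eqP <- /comp_filt_s []].
Qed.

Lemma sum_comp_sym_Gslice :
  \sum_(q <- s) comp_sym q.1 q.2 =
  \sum_(v <- undup (map (rsubmx \o fst) s)) symG v (Gslice v).
Proof.
have uV := undup_uniq (map (rsubmx \o fst) s).
rewrite (big_seq_fibers _ uV (g := rsubmx \o fst)); last first.
  by move=> q sq; rewrite mem_undup map_f.
apply: eq_bigr => v _; rewrite /Gslice -big_filter -[in RHS]big_filter.
rewrite (sym_sum filtG grG); last first.
  by move=> q; rewrite mem_filter => /andP[/eqP <- /comp_filt_s []].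
by apply: eq_big_seq => q; rewrite mem_filter => /andP[/eqP <- _].
Qed.

Lemma Gslice_sym_eq0 v : uniq (map fst s) -> symG v (Gslice v) = 0 ->
  forall q, q \in s -> rsubmx q.1 = v -> comp_sym q.1 q.2 = 0.
Proof.
move=> us /(sym_eq0P grG (Gslice_filt v)) [v' [ltv' Gv']] q sq rq.
pose sF := [seq (lsubmx p.1, p.2) | p <- s & rsubmx p.1 == v].
have usF : uniq (map fst sF).
  have -> : map fst sF = map lsubmx [seq x <- map fst s | rsubmx x == v].
    by rewrite filter_map -!map_comp.
  rewrite map_inj_in_uniq ?filter_uniq // => x y.
  rewrite !mem_filter => /andP[/eqP rx _] /andP[/eqP ry _] lxy.
  by rewrite -(hsubmxK x) -(hsubmxK y) lxy rx ry.
have Gq : G v' (symF (lsubmx q.1) q.2).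
  move: (compFG (v := v') usF) => /(_ _ _ (lsubmx q.1, q.2)) /=; apply.
  - by move=> p /mapP [p' + ->]; rewrite mem_filter => /andP[_ /comp_filt_s []].
  - by rewrite big_map big_filter.
  - by apply: map_f; rewrite mem_filter rq eqxx.
have [_ Gq1] := comp_filt_s sq.
by apply/(sym_eq0P grG Gq1); exists v'; rewrite rq.
Qed.

End GradedSlices.

Lemma comp_sym_indep (s : seq ('rV[int]_(M + L) * A)) :
  uniq (map fst s) -> (forall q, q \in s -> comp_filt q.1 q.2) ->
  \sum_(q <- s) comp_sym q.1 q.2 = 0 -> forall q, q \in s -> comp_sym q.1 q.2 = 0.
Proof.
move=> us Hs sum0 q sq.
pose t := [seq (v, Gslice s v) | v <- undup (map (rsubmx \o fst) s)].
have [_ _ _ _ indepG] := grG.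
have symG_t0 : forall p, p \in t -> symG p.1 p.2 = 0.
  apply: indepG.
  - by rewrite -map_comp map_id_in // undup_uniq.
  - by move=> p /mapP [v _ ->]; apply: Gslice_filt.
  - by rewrite big_map -sum_comp_sym_Gslice.
apply: (Gslice_sym_eq0 Hs us _ sq erefl).
by apply: (symG_t0 (_, _)); rewrite map_f // mem_undup map_f.
Qed.

Lemma comp_sym_is_gr : is_gr (lexlt lt1 lt2) comp_filt comp_sym.
Proof.
have [linF _ symFM _ _] := grF; have [linG _ symGM spanG _] := grG.
split.
- by move=> x c a b [Fa Ga] [Fb Gb]; rewrite /comp_sym linF // linG.
- exact: comp_sym_eq0P.
- move=> x y a b [Fa Ga] [Fb Gb].
  by rewrite /comp_sym symGM // symFM // !raddfD.
- move=> z; have [t [ut Gt ->]] := spanG z.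
  by have [s [us Hs _ ->]] := comp_sym_span ut Gt; exists s.
- exact: comp_sym_indep.
Qed.

End CompositeFiltration.

Theorem mainTheorem4 (k : fieldType) (A : algType k) (M L : nat)
  (lt1 : rel 'rV[int]_M) (lt2 : rel 'rV[int]_L)
  (F : 'rV[int]_M -> A -> Prop) (B : algType k) (symF : 'rV[int]_M -> A -> B)
  (G : 'rV[int]_L -> B -> Prop) (C : algType k) (symG : 'rV[int]_L -> B -> C) :
  ordered_group lt1 -> ordered_group lt2 -> domain A ->
  filtration lt1 F -> is_gr lt1 F symF -> domain B ->
  filtration lt2 G -> is_gr lt2 G symG -> domain C ->
  compatible F symF G ->
  exists H : 'rV[int]_(M + L) -> A -> Prop,
    [/\ ordered_group (lexlt lt1 lt2),
        filtration (lexlt lt1 lt2) H,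
        is_gr (lexlt lt1 lt2) H (fun x a => symG (rsubmx x) (symF (lsubmx x) a))
      & domain C].
Proof.
move=> og1 og2 _ filtF grF _ filtG grG domC compFG.
exists (comp_filt F symF G); split.
- exact: lexlt_ordered_group.
- exact: comp_filt_filtration.
- exact: comp_sym_is_gr.
- exact: domC.
Qed.
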